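(* Let $d\ge 2$ and let $\rho$ be any density matrix on $\mathbb{C}^d$. Then $$\frac{C_{l_1}(\rho)^2}{(d-1)^2} + M_l(\rho) \le 1 .$$
   Context: Fix the computational (reference) basis $\{|i\rangle\}_{i=1}^d$ of $\mathbb{C}^d$ and write $\rho_{ij}=\langle i|\rho|j\rangle$. The $l_1$ norm of coherence is $C_{l_1}(\rho)=\sum_{i\neq j}|\rho_{ij}|$. The mixedness (normalized linear entropy) is $M_l(\rho)=\frac{d}{d-1}\left(1-\mathrm{Tr}\,\rho^2\right)$. *)

(* Complex numbers are modelled by an arbitrary
   numClosedFieldType C (e.g. algC, or the genuine complex numbers). *)
From HB Require Import structures.
From mathcomp Require Import all_boot all_order all_algebra.
Set Implicit Arguments. Unset Strict Implicit. Unset Printing Implicit Defensive.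
Import Order.TTheory GRing.Theory Num.Theory.
Local Open Scope ring_scope.

Definition adjmx {C : numClosedFieldType} {m n : nat} (A : 'M[C]_(m, n)) : 'M[C]_(n, m) :=
  (map_mx Num.conj A)^T.

Definition density_matrix {C : numClosedFieldType} {d : nat} (rho : 'M[C]_d) : Prop :=
  [/\ adjmx rho = rho,
      (forall v : 'cV[C]_d, 0 <= (adjmx v *m rho *m v) ord0 ord0)
    & \tr rho = 1].

Definition coh_l1 {C : numClosedFieldType} {d : nat} (rho : 'M[C]_d) : C :=
  \sum_(i < d) \sum_(j < d | i != j) `|rho i j|.

Definition mixedness {C : numClosedFieldType} {d : nat} (rho : 'M[C]_d) : C :=
  (d%:R / (d%:R - 1)) * (1 - \tr (rho *m rho)).

From HB Require Import structures.
From mathcomp Require Import all_boot all_order all_algebra.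
From mathcomp Require Import ring.
Import Order.TTheory GRing.Theory Num.Theory.
Local Open Scope ring_scope.

(* For Hermitian rho, Tr rho^2 = D + O with D the sum of the squared diagonal
   moduli and O that of the off-diagonal ones. Cauchy-Schwarz over the d(d-1)
   off-diagonal entries gives C_l1^2 <= d(d-1) O, and over the diagonal, together
   with 1 = |Tr rho| <= sum |rho_ii|, gives d D >= 1. Then
   C_l1^2/(d-1)^2 + M_l <= d O/(d-1) + d(1 - D - O)/(d-1) = (d - d D)/(d-1) <= 1. *)

Lemma sqr_sum_le_card_sum_sqr {R : numDomainType} {I : finType} {P : pred I}
    {x : I -> R} :
  (forall i, P i -> 0 <= x i) ->
  (\sum_(i | P i) x i) ^+ 2 <= #|P|%:R * \sum_(i | P i) x i ^+ 2.
Proof.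
move=> x_ge0; have [/card0_eq P0|P_gt0] := posnP #|P|.
  by rewrite !big_pred0 // expr0n mulr0.
set n : R := #|P|%:R; set S := \sum_(i | P i) x i.
set T := \sum_(i | P i) x i ^+ 2.
have S_ge0 : 0 <= S by apply: sumr_ge0.
have n_gt0 : 0 < n by rewrite ltr0n.
have : 0 <= \sum_(i | P i) (n * x i - S) ^+ 2.
  apply: sumr_ge0 => i Pi.
  have real_i : n * x i - S \is Num.real.
    by rewrite realB ?ger0_real // mulr_ge0 ?x_ge0 // ltW.
  by rewrite -real_normK // exprn_ge0.
have -> : \sum_(i | P i) (n * x i - S) ^+ 2 = n * (n * T - S ^+ 2).
  rewrite (eq_bigr (fun i => n ^+ 2 * x i ^+ 2 - (2 * n * S) * x i + S ^+ 2));
    last by move=> i _; ring.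
  rewrite big_split sumrB /= -!mulr_sumr -/S -/T sumr_const -mulr_natr -/n.
  by ring.
by rewrite pmulr_rge0 // subr_ge0.
Qed.

Section MatrixEntries.

Context {C : numClosedFieldType} {d : nat}.
Implicit Types A : 'M[C]_d.

Definition diag_sqr A : C := \sum_(i < d) `|A i i| ^+ 2.

Definition offdiag_sqr A : C := \sum_(i < d) \sum_(j < d | i != j) `|A i j| ^+ 2.

Lemma hermitian_tr_sqr A : adjmx A = A -> \tr (A *m A) = diag_sqr A + offdiag_sqr A.
Proof.
move=> AH; have conjA i j : (A i j)^* = A j i by rewrite -{2}AH !mxE.
rewrite /diag_sqr /offdiag_sqr -big_split; apply: eq_bigr => i _.
rewrite mxE (bigD1 i) //= normCK conjA; congr (_ + _).
by apply: eq_big => [j|j _]; rewrite 1?eq_sym // normCK conjA.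
Qed.

Lemma coh_l1_sqr_le A : coh_l1 A ^+ 2 <= d%:R * (d%:R - 1) * offdiag_sqr A.
Proof.
have row_le i : (\sum_(j < d | i != j) `|A i j|) ^+ 2
    <= (d%:R - 1) * \sum_(j < d | i != j) `|A i j| ^+ 2.
  have -> : d%:R - 1 = #|[pred j : 'I_d | i != j]|%:R :> C.
    rewrite (eq_card (B := predC1 i)) => [|j]; last by rewrite !inE eq_sym.
    by rewrite cardC1 card_ord -subn1 natrB // (leq_ltn_trans _ (ltn_ord i)).
  by apply: sqr_sum_le_card_sum_sqr => j _.
rewrite /coh_l1 /offdiag_sqr -mulrA.
apply: le_trans (sqr_sum_le_card_sum_sqr _) _ => [i _|]; first exact: sumr_ge0.
rewrite card_ord ler_wpM2l ?ler0n // mulr_sumr; apply: ler_sum => i _; exact: row_le.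
Qed.

Lemma tr1_diag_sqr_ge A : \tr A = 1 -> 1 <= d%:R * diag_sqr A.
Proof.
move=> trA1.
have := sqr_sum_le_card_sum_sqr (P := xpredT) (fun i _ => normr_ge0 (A i i)).
rewrite -[#|xpredT|]/#|'I_d| card_ord; apply: le_trans; apply: exprn_ege1.
by rewrite -(normr1 C) -trA1; apply: ler_norm_sum.
Qed.

End MatrixEntries.

Theorem theorem1 (C : numClosedFieldType) (d : nat) (hd : (2 <= d)%N)
  (rho : 'M[C]_d) (hrho : density_matrix rho) :
  coh_l1 rho ^+ 2 / (d%:R - 1) ^+ 2 + mixedness rho <= 1.
Proof.
case: hrho => rhoH _ tr_rho; rewrite /mixedness (hermitian_tr_sqr _ rhoH).
set k : C := d%:R - 1; set D := diag_sqr rho; set O := offdiag_sqr rho.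
have k_gt0 : 0 < k by rewrite subr_gt0 ltr1n.
apply: (le_trans (y := d%:R * O / k + d%:R / k * (1 - (D + O)))).
  rewrite lerD2r ler_pdivrMr ?exprn_gt0 //.
  have -> : d%:R * O / k * k ^+ 2 = d%:R * k * O by field; rewrite gt_eqF.
  exact: coh_l1_sqr_le.
have -> : d%:R * O / k + d%:R / k * (1 - (D + O)) = (d%:R - d%:R * D) / k.
  by field; rewrite gt_eqF.
by rewrite ler_pdivrMr // mul1r lerD2l lerN2 tr1_diag_sqr_ge.
Qed.
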